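(* Let $d\ge 0$ and $n>d$ be integers, and let $T\in L(n,d)$ with $T\neq\emptyset$. Then the poset ideal $\mathcal{I}_{n,d}(T)$ is isomorphic as a poset to the direct product $\prod_{T_i\in T}\mathcal{I}_{n,d}(\{T_i\})$, and both are isomorphic as posets to $\prod_{T_i\in T} L(n-|T_i|,\,d-|T_i|)$.
   Context: For a finite set $X$ let $\operatorname{codim}_d(X)=d+1-|X|$. For a finite collection $\{T_1,\dots,T_l\}$ of pairwise distinct finite sets put $\rho_d(\{T_1,\dots,T_l\})=\sum_{i=1}^l\operatorname{codim}_d(T_i)$ (with $\rho_d(\emptyset)=0$) and $D_d(\{T_1,\dots,T_l\})=\operatorname{codim}_d(T_1\cap\cdots\cap T_l)-\rho_d(\{T_1,\dots,T_l\})$. For integers $d\ge0$, $n>d$, $L(n,d)$ is the set of all collections $T$ of subsets of $\{1,\dots,n\}$ such that (i) $D_d(T')>0$ for every $T'\subset T$ with $|T'|>1$, and (ii) $0\le|T_i|\le d$ for every $T_i\in T$ (so $L(n,0)=\{\emptyset,\{\emptyset\}\}$). It is partially ordered by: $T<T'$ iff $\rho_d(T)<\rho_d(T')$ and for every $T_i\in T$ there exists $T'_j\in T'$ with $T'_j\subset T_i$; $T\le T'$ means $T<T'$ or $T=T'$. For $T\in L(n,d)$, $\mathcal{I}_{n,d}(T)=\{S\in L(n,d): S\le T\}$ with the induced order. Direct products of posets carry the componentwise order. *)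

From HB Require Import structures.
From mathcomp Require Import all_boot all_order all_algebra.
Set Implicit Arguments. Unset Strict Implicit. Unset Printing Implicit Defensive.
Import Order.TTheory GRing.Theory Num.Theory.
Local Open Scope ring_scope.

Section LDefs.
Variable U : finType.

Definition codim (d : nat) (X : {set U}) : int := (d.+1)%:Z - (#|X|)%:Z.

Definition rho (d : nat) (C : {set {set U}}) : int := \sum_(S in C) codim d S.

Definition Dd (d : nat) (C : {set {set U}}) : int :=
  codim d (\bigcap_(S in C) S) - rho d C.

(* membership in L(n,d), with ground set U (= 'I_n for {1,...,n}) *)
Definition inL (d : nat) (C : {set {set U}}) : bool :=
  [forall C' : {set {set U}}, ((C' \subset C) && (1 < #|C'|)%N) ==> (0 < Dd d C')]
  && [forall S in C, (#|S| <= d)%N].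

Definition ltL (d : nat) (C C' : {set {set U}}) : bool :=
  (rho d C < rho d C') && [forall S in C, exists S' in C', S' \subset S].

Definition leL (d : nat) (C C' : {set {set U}}) : bool := ltL d C C' || (C == C').

Definition idealL (d : nat) (T : {set {set U}}) : pred {set {set U}} :=
  [pred C | inL d C && leL d C T].
End LDefs.

Definition poset_iso (X Y : Type) (A : X -> bool) (leA : X -> X -> bool)
    (B : Y -> bool) (leB : Y -> Y -> bool) : Prop :=
  exists f : X -> Y,
    [/\ (forall x, A x -> B (f x)),
        (forall x y, A x -> A y -> f x = f y -> x = y),
        (forall y, B y -> exists2 x, A x & f x = y) &
        (forall x y, A x -> A y -> (leA x y = leB (f x) (f y)))].

(* Product  prod_{T_i in T} I_{n,d}({T_i}): functions indexed by the members
   of T (value set0 off T), with componentwise order. *)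
Definition prodI (n d : nat) (T : {set {set 'I_n}}) :
    pred {ffun {set 'I_n} -> {set {set 'I_n}}} :=
  [pred g : {ffun {set 'I_n} -> {set {set 'I_n}}} | [forall S, if S \in T then g S \in idealL d [set S] else g S == set0]].

Definition prodI_le (n d : nat) (T : {set {set 'I_n}})
    (g h : {ffun {set 'I_n} -> {set {set 'I_n}}}) : bool :=
  [forall S in T, leL d (g S) (h S)].

(* Product  prod_{T_i in T} L(n - |T_i|, d - |T_i|), the factor at T_i living
   on the ground set 'I_(n - |T_i|). *)
Definition prodLtype (n : nat) :=
  {dffun forall S : {set 'I_n}, {set {set 'I_(n - #|S|)}}}.

Definition prodL (n d : nat) (T : {set {set 'I_n}}) : pred (prodLtype n) :=
  [pred g : prodLtype n | [forall S, if S \in T then inL (d - #|S|) (g S) else g S == set0]].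

Definition prodL_le (n d : nat) (T : {set {set 'I_n}}) (g h : prodLtype n) : bool :=
  [forall S in T, leL (d - #|S|) (g S) (h S)].

From HB Require Import structures.
From mathcomp Require Import all_boot all_order all_algebra zify.
Set Implicit Arguments. Unset Strict Implicit. Unset Printing Implicit Defensive.

(* On L(n, d) the order is refinement: [C <= C'] iff every member of [C] contains a member
   of [C'], because a proper refinement strictly increases [rho_d] (group the members of [C]
   by a member of [C'] below them and use the positivity of [D_d] on each group).
   Two distinct members of [T] never lie in a common set of size at most [d], so every
   member of an element [C] of the ideal of [T] lies above exactly one [T_i]; hence [C]
   splits into the pieces [{X \in C | T_i \subset X}] of I({T_i}), and conversely a union of
   such pieces lies in L(n, d), combining the positivity of [D_d] on the pieces with its
   positivity on subcollections of [T]. Finally [X |-> X :\: T_i], with the complement of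
   [T_i] renumbered as {0, ..., n - |T_i| - 1}, identifies I({T_i}) with
   L(n - |T_i|, d - |T_i|): lowering [d] and every [|X|] by [|T_i|] preserves [codim_d]. *)

Lemma leq_card_bigcup (I T : finType) (P : pred I) (B : I -> {set T}) :
  #|\bigcup_(i | P i) B i| <= \sum_(i | P i) #|B i|.
Proof.
elim/big_rec2: _ => [|i A m _ IH]; first by rewrite cards0.
by apply: leq_trans (leq_card_setU _ _) _; rewrite leq_add2l.
Qed.

Lemma card_bigcap_growth (I T : finType) (P : {set I}) (F G : I -> {set T}) :
  (forall i, i \in P -> F i \subset G i) ->
  \sum_(i in P) #|F i| + #|\bigcap_(i in P) G i|
    <= \sum_(i in P) #|G i| + #|\bigcap_(i in P) F i|.
Proof.
move=> FG; set capG := \bigcap_(i in P) G i; set capF := \bigcap_(i in P) F i.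
have splitG := cardsID capF capG.
have capGF : #|capG :&: capF| <= #|capF| by apply/subset_leq_card/subsetIr.
have diffG : #|capG :\: capF| <= \sum_(i in P) #|G i :\: F i|.
  apply: leq_trans (leq_card_bigcup _ _) ; apply/subset_leq_card/subsetP => x.
  case/setDP => /bigcapP xG /bigcapP xnF; apply/bigcupP.
  have [i iP xFi] : exists2 i, i \in P & x \notin F i.
    by apply/exists_inP; rewrite -negb_forall_in; apply/forall_inP.
  by exists i => //; rewrite inE xFi xG.
have sumG : \sum_(i in P) #|G i| = \sum_(i in P) #|F i| + \sum_(i in P) #|G i :\: F i|.
  rewrite -big_split; apply: eq_bigr => i iP /=.
  by rewrite -(cardsID (F i) (G i)) (setIidPr (FG i iP)).
lia.
Qed.

Lemma poset_iso_trans (X Y Z : Type) (A : X -> bool) leA (B : Y -> bool) leB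
    (C : Z -> bool) leC :
  poset_iso A leA B leB -> poset_iso B leB C leC -> poset_iso A leA C leC.
Proof.
case=> f [fAB f_inj f_onto f_mono] [g [gBC g_inj g_onto g_mono]].
exists (g \o f); split => /=.
- by move=> x /fAB /gBC.
- by move=> x y Ax Ay /(g_inj _ _ (fAB _ Ax) (fAB _ Ay)) /(f_inj _ _ Ax Ay).
- by move=> z /g_onto [y By <-]; have [x Ax <-] := f_onto y By; exists x.
- by move=> x y Ax Ay; rewrite f_mono // g_mono ?fAB.
Qed.

Section Collections.
Variable U : finType.
Implicit Types (X Y S : {set U}) (C D G R : {set {set U}}).

Definition sumcard C := \sum_(X in C) #|X|.

Definition positive_defect d C :=
  #|\bigcap_(X in C) X| + #|C| * d.+1 < sumcard C + d.+1.

Definition refines C D := [forall X in C, exists Y in D, Y \subset X].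

Lemma rho_sumcard d C : rho d C = ((#|C| * d.+1)%:Z - (sumcard C)%:Z)%R.
Proof.
rewrite /rho /codim GRing.sumrB GRing.sumr_const /sumcard -(big_morph Posz PoszD (erefl _)).
by rewrite -GRing.mulr_natr natz -PoszM mulnC.
Qed.

Lemma Dd_gt0 d C : (0 < Dd d C)%R = positive_defect d C.
Proof.
rewrite /Dd rho_sumcard /codim /positive_defect.
set a := #|_|; set b := #|C| * d.+1; set s := sumcard C.
by apply/idP/idP; lia.
Qed.

Lemma inL_defect d C C' : inL d C -> C' \subset C -> 1 < #|C'| -> positive_defect d C'.
Proof.
by case/andP => /forallP inLC _ sC'C C'gt1; have := inLC C'; rewrite sC'C C'gt1 Dd_gt0.
Qed.

Lemma inL_card d C X : inL d C -> X \in C -> #|X| <= d.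
Proof. by case/andP => _ /forall_inP; apply. Qed.

Lemma inLI d C :
  (forall C', C' \subset C -> 1 < #|C'| -> positive_defect d C') ->
  {in C, forall X, #|X| <= d} -> inL d C.
Proof.
move=> defC cardC; apply/andP; split; last exact/forall_inP.
by apply/forallP => C'; apply/implyP => /andP [sC'C C'gt1]; rewrite Dd_gt0 defC.
Qed.

Lemma inL_subset d C C' : inL d C -> C' \subset C -> inL d C'.
Proof.
move=> inLC sC'C; apply: inLI => [C'' sC''C' | X XC']; last exact/(inL_card inLC)/(subsetP sC'C).
exact/(inL_defect inLC)/(subset_trans sC''C').
Qed.

Lemma inL_set1 d X : #|X| <= d -> inL d [set X].
Proof.
move=> Xd; apply: inLI => [C' sC' C'gt1 | Y /set1P -> //].
by have := subset_leq_card sC'; rewrite cards1; lia.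
Qed.

(* Positivity of [D_d] on the pair [{S, S'}] says [|S :|: S'| > d]. *)
Lemma inL_below_uniq d C S S' X :
  inL d C -> S \in C -> S' \in C -> S \subset X -> S' \subset X -> #|X| <= d -> S = S'.
Proof.
move=> inLC SC S'C SX S'X Xd; apply/eqP; apply: contraT => SS'.
have sC : [set S; S'] \subset C by apply/subsetP => Z /set2P [] ->.
have := inL_defect inLC sC; rewrite cards2 SS' /positive_defect => /(_ isT).
rewrite /sumcard !big_setU1 ?inE //= !big_set1 cards2 SS'.
have := cardsUI S S'.
have : #|S :|: S'| <= #|X| by apply/subset_leq_card; rewrite subUset SX S'X.
lia.
Qed.

Definition pick_below D X := odflt X [pick Y in D | Y \subset X].

Lemma pick_belowP D X :
  (exists2 Y, Y \in D & Y \subset X) -> pick_below D X \in D /\ pick_below D X \subset X.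
Proof.
by case=> Y YD YX; rewrite /pick_below; case: pickP => [Z /andP [] | /(_ Y)]; rewrite ?YD ?YX.
Qed.

Lemma refines_pick_below C D X :
  refines C D -> X \in C -> pick_below D X \in D /\ pick_below D X \subset X.
Proof. by move=> /forall_inP CD XC; apply/pick_belowP/exists_inP/CD. Qed.

Definition fibre (p : {set U} -> {set U}) C Y := [set X in C | p X == Y].

Lemma fibre_sub p C Y : fibre p C Y \subset C.
Proof. by apply/subsetP => X; rewrite inE => /andP []. Qed.

Lemma sum_fibres (F : {set U} -> nat) p C D : {in C, forall X, p X \in D} ->
  \sum_(X in C) F X = \sum_(Y in D) \sum_(X in fibre p C Y) F X.
Proof.
move=> pCD; rewrite (partition_big p (mem D)) //=.
by apply: eq_bigr => Y _; apply: eq_bigl => X; rewrite inE.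
Qed.

Lemma card_fibres p C D : {in C, forall X, p X \in D} ->
  #|C| = \sum_(Y in D) #|fibre p C Y|.
Proof.
by move=> pCD; rewrite -sum1_card (sum_fibres _ pCD); apply: eq_bigr => Y _; rewrite sum1_card.
Qed.

Lemma sumcard_fibres p C D : {in C, forall X, p X \in D} ->
  sumcard C = \sum_(Y in D) sumcard (fibre p C Y).
Proof. exact: sum_fibres. Qed.

(* The slack [G != [set Y]] is what makes a proper refinement strictly increase [rho]. *)
Lemma sumcard_common_lb d C G Y : inL d C -> G \subset C -> #|Y| <= d ->
  {in G, forall X, Y \subset X} ->
  #|G| * d.+1 + #|Y| + (G != [set Y]) <= sumcard G + d.+1.
Proof.
move=> inLC sGC Yd YG; have slack := leq_b1 (G != [set Y]).
case: (ltngtP #|G| 1) => [| G_gt1 | /eqP/cards1P [X GX]]; last subst G.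
- rewrite ltnS leqn0 cards_eq0 => /eqP ->.
  rewrite cards0 /sumcard big_set0; lia.
- have := inL_defect inLC sGC G_gt1; rewrite /positive_defect.
  have : #|Y| <= #|\bigcap_(X in G) X| by apply/subset_leq_card/bigcapsP.
  lia.
- have YX : Y \subset X by apply: YG; rewrite set11.
  rewrite /sumcard big_set1 cards1 mul1n.
  case: (eqVneq X Y) => [-> | XY]; first by rewrite eqxx addn0 addnC.
  have : #|Y| < #|X| by apply: proper_card; rewrite properEneq eq_sym XY.
  rewrite (inj_eq set1_inj) XY; lia.
Qed.

Lemma refines_fibre_proper C D : refines C D -> C != D ->
  exists2 Y, Y \in D & fibre (pick_below D) C Y != [set Y].
Proof.
move=> CD CnD.
have [sDC | /subsetPn [Y YD YnC]] := boolP (D \subset C); last first.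
  exists Y => //; apply: contraNneq YnC => GY.
  by apply: (subsetP (fibre_sub (pick_below D) C Y)); rewrite GY set11.
have /subsetPn [X XC XnD] : ~~ (C \subset D) by rewrite eqEsubset sDC andbT in CnD.
have [pXD pXX] := refines_pick_below CD XC.
exists (pick_below D X) => //; apply/eqP => GpX.
have : X \in fibre (pick_below D) C (pick_below D X) by rewrite inE XC eqxx.
by rewrite GpX => /set1P XpX; rewrite XpX pXD in XnD.
Qed.

Lemma refines_rho_lt d C D : inL d C -> {in D, forall Y, #|Y| <= d} ->
  refines C D -> C != D -> #|C| * d.+1 + sumcard D < #|D| * d.+1 + sumcard C.
Proof.
move=> inLC Dcard CD CnD; set p := pick_below D.
have pCD : {in C, forall X, p X \in D} by move=> X /(refines_pick_below CD) [].
have fibre_lb Y : Y \in D ->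
    #|fibre p C Y| * d.+1 + #|Y| + (fibre p C Y != [set Y]) <= sumcard (fibre p C Y) + d.+1.
  move=> YD; apply: sumcard_common_lb (fibre_sub _ _ _) (Dcard Y YD) _ => //.
  by move=> X; rewrite inE => /andP [XC /eqP <-]; have [] := refines_pick_below CD XC.
have [Y0 Y0D fibreY0] := refines_fibre_proper CD CnD.
have := leq_sum (index_enum _) fibre_lb; rewrite !big_split /= -big_distrl /= sum_nat_const.
rewrite -(card_fibres pCD) -(sumcard_fibres pCD) -/(sumcard D) (bigD1 Y0) //= fibreY0 add1n.
set a := #|C| * d.+1; set b := #|D| * d.+1; lia.
Qed.

Lemma refines_refl C : refines C C.
Proof. by apply/forall_inP => X XC; apply/exists_inP; exists X. Qed.

Lemma leL_refines d C D : inL d C -> inL d D -> leL d C D = refines C D.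
Proof.
move=> inLC inLD; rewrite /leL /ltL -/(refines C D).
have [-> | CnD] := eqVneq C D; first by rewrite orbT refines_refl.
rewrite orbF; case CD: (refines C D); rewrite ?andbF // andbT !rho_sumcard.
have := refines_rho_lt inLC (fun Y => inL_card inLD) CD CnD; lia.
Qed.

Lemma positive_defect_glue d T R (p : {set U} -> {set U}) :
  inL d T -> {in R, forall X, p X \in T /\ p X \subset X} -> 1 < #|p @: R| ->
  (forall S, S \in p @: R ->
     #|fibre p R S| * d.+1 + #|\bigcap_(X in fibre p R S) X| <= sumcard (fibre p R S) + d.+1) ->
  positive_defect d R.
Proof.
move=> inLT pR I_gt1 fibre_ub; set I := p @: R.
pose capF S := \bigcap_(X in fibre p R S) X.
have pI : {in R, forall X, p X \in I} by move=> X XR; apply: imset_f.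
have sIT : I \subset T by apply/subsetP => _ /imsetP [X XR ->]; have [] := pR X XR.
have sum_ub : #|R| * d.+1 + \sum_(S in I) #|capF S| <= sumcard R + #|I| * d.+1.
  have := leq_sum (index_enum _) fibre_ub.
  by rewrite !big_split /= -!big_distrl /= sum_nat_const -(card_fibres pI) -(sumcard_fibres pI).
have growth : \sum_(S in I) #|S| + #|\bigcap_(S in I) capF S|
    <= \sum_(S in I) #|capF S| + #|\bigcap_(S in I) S|.
  apply: (card_bigcap_growth (F := id)) => S _ /=; apply/bigcapsP => X.
  by rewrite inE => /andP [XR /eqP <-]; have [] := pR X XR.
have capR : \bigcap_(X in R) X = \bigcap_(S in I) capF S.
  apply/setP => x; apply/bigcapP/bigcapP => [xR S _ | xI X XR].
    by apply/bigcapP => X /setIdP [XR _]; apply: xR.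
  by have /bigcapP := xI _ (pI X XR); apply; rewrite inE XR eqxx.
have := inL_defect inLT sIT I_gt1.
move: sum_ub growth; rewrite /positive_defect capR /sumcard.
set a := #|R| * d.+1; set b := #|I| * d.+1.
set capI := #|\bigcap_(S in I) S|; set sumI := \sum_(S in I) #|S|; lia.
Qed.

(* Each member of the union lies above a unique [S \in T], so a subcollection [R] is either
   inside a single [g S] or glues pieces lying above at least two members of [T]. *)
Lemma inL_bigcup d T (g : {set U} -> {set {set U}}) : inL d T ->
  (forall S, S \in T -> inL d (g S)) -> (forall S X, S \in T -> X \in g S -> S \subset X) ->
  inL d (\bigcup_(S in T) g S).
Proof.
move=> inLT inLg gS; set C := \bigcup_(S in T) g S.
have cardC X : X \in C -> #|X| <= d by case/bigcupP => S ST /(inL_card (inLg S ST)).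
apply: inLI => // R sRC R_gt1; set p := pick_below T.
have pR X : X \in R -> [/\ p X \in T, p X \subset X & X \in g (p X)].
  move=> XR; have XC := subsetP sRC X XR; have /bigcupP [S ST XgS] := XC.
  have [pXT pXX] := pick_belowP (ex_intro2 _ _ S ST (gS S X ST XgS)).
  have -> : p X = S := inL_below_uniq inLT pXT ST pXX (gS S X ST XgS) (cardC X XC).
  by split => //; apply: gS XgS.
have [I_le1 | I_gt1] := leqP #|p @: R| 1.
  have [X0 X0R] : exists X0, X0 \in R by apply/card_gt0P/ltnW.
  have [pX0T _ _] := pR X0 X0R.
  apply: inL_defect (inLg _ pX0T) _ R_gt1; apply/subsetP => X XR.
  by have [_ _] := pR X XR; rewrite (card_le1_eqP I_le1 (p X) (p X0)) ?imset_f.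
apply: positive_defect_glue inLT _ I_gt1 _ => [X /pR [] // | _ /imsetP [X0 X0R ->]].
have [pX0T _ _] := pR X0 X0R.
have sFg : fibre p R (p X0) \subset g (p X0).
  by apply/subsetP => X /setIdP [XR /eqP <-]; have [] := pR X XR.
have X0F : X0 \in fibre p R (p X0) by rewrite inE X0R eqxx.
have capF_d : #|\bigcap_(X in fibre p R (p X0)) X| <= d.
  exact: leq_trans (subset_leq_card (bigcap_inf _ X0F)) (cardC X0 (subsetP sRC X0 X0R)).
apply: leq_trans (sumcard_common_lb (inLg _ pX0T) sFg capF_d _); first exact: leq_addr.
by move=> X; apply: bigcap_inf.
Qed.

Definition above C S := [set X in C | S \subset X].

Lemma above_sub C S : above C S \subset C.
Proof. by apply/subsetP => X /setIdP []. Qed.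

Lemma bigcup_above C T : refines C T -> \bigcup_(S in T) above C S = C.
Proof.
move=> /forall_inP CT; apply/setP => X; apply/bigcupP/idP => [[S _ /setIdP []] // | XC].
by have /exists_inP [S ST SX] := CT X XC; exists S; rewrite // inE XC.
Qed.

Lemma above_bigcup d T (g : {set U} -> {set {set U}}) S : inL d T ->
  (forall S' X, S' \in T -> X \in g S' -> S' \subset X /\ #|X| <= d) ->
  S \in T -> above (\bigcup_(S' in T) g S') S = g S.
Proof.
move=> inLT gT ST; apply/setP => X; rewrite inE.
apply/andP/idP => [[/bigcupP [S' S'T XgS'] SX] | XgS]; last first.
  by split; [apply/bigcupP; exists S | have [] := gT S X ST XgS].
have [S'X Xd] := gT S' X S'T XgS'.
by rewrite (inL_below_uniq inLT ST S'T SX S'X Xd).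
Qed.

Lemma refines_above d T C C' : inL d T -> {in C, forall X, #|X| <= d} ->
  refines C T -> refines C' T ->
  refines C C' = [forall S in T, refines (above C S) (above C' S)].
Proof.
move=> inLT Cd /forall_inP CT /forall_inP C'T.
apply/forall_inP/forall_inP => [CC' S ST | CC'S X XC].
  apply/forall_inP => X /setIdP [XC SX].
  have /exists_inP [Y YC' YX] := CC' X XC.
  have /exists_inP [S' S'T S'Y] := C'T Y YC'.
  have eqS := inL_below_uniq inLT ST S'T SX (subset_trans S'Y YX) (Cd X XC).
  by apply/exists_inP; exists Y; rewrite // inE YC' eqS.
have /exists_inP [S ST SX] := CT X XC.
have XCS : X \in above C S by rewrite inE XC.
have /exists_inP [Y /setIdP [YC' _] YX] := forall_inP (CC'S S ST) X XCS.
by apply/exists_inP; exists Y.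
Qed.

Lemma refines_set1 D S :
  refines D [set S] = [forall X in D, S \subset X].
Proof.
apply/forall_inP/forall_inP => DS X XD; last by apply/exists_inP; exists S; rewrite ?set11 ?DS.
by have /exists_inP [_ /set1P ->] := DS X XD.
Qed.

Lemma idealL_refines d T C :
  inL d T -> idealL d T C = inL d C && refines C T.
Proof. by move=> inLT; rewrite /idealL /=; case inLC: (inL d C) => //=; rewrite leL_refines. Qed.

Lemma idealL_set1P d S D : #|S| <= d ->
  reflect (inL d D /\ {in D, forall X, S \subset X}) (D \in idealL d [set S]).
Proof.
move=> Sd; rewrite inE /=; apply: (iffP andP) => -[inLD]; rewrite leL_refines ?inL_set1 //.
  by rewrite refines_set1 => /forall_inP.
by rewrite refines_set1 => /forall_inP.
Qed.

End Collections.

Section Transport.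
Variables (U V : finType) (A : {set U}) (e : V -> U).
Hypotheses (e_inj : injective e) (e_notin : forall v, e v \notin A)
  (e_onto : forall u, u \notin A -> exists v, e v = u).
Implicit Types (X : {set U}) (Y : {set V}) (C D : {set {set U}}).

Definition restr X : {set V} := e @^-1: X.
Definition extend Y : {set U} := A :|: e @: Y.

Lemma extendK : cancel extend restr.
Proof. by move=> Y; apply/setP => v; rewrite !inE (negbTE (e_notin v)) mem_imset. Qed.

Lemma restrK X : A \subset X -> extend (restr X) = X.
Proof.
move=> AX; apply/setP => u; rewrite !inE.
have [uA | /e_onto [v <-]] := boolP (u \in A); first by rewrite (subsetP AX).
by rewrite mem_imset // inE.
Qed.

Lemma subset_extend Y : A \subset extend Y.
Proof. exact: subsetUl. Qed.

Lemma card_restr X : A \subset X -> #|restr X| + #|A| = #|X|.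
Proof.
move=> AX; rewrite -{2}(restrK AX) /extend cardsU card_imset //.
suff -> : A :&: e @: restr X = set0 by rewrite cards0 subn0 addnC.
apply/setP => u; rewrite !inE; apply/andP => -[uA /imsetP [v _ uv]].
by move: (e_notin v); rewrite -uv uA.
Qed.

Lemma restr_subset X X' : A \subset X -> A \subset X' ->
  (restr X \subset restr X') = (X \subset X').
Proof.
move=> AX AX'; apply/idP/idP => [sXX' | ]; last exact: preimsetS.
by rewrite -(restrK AX) -(restrK AX'); apply/setUS/imsetS.
Qed.

Lemma bigcap_restr C : \bigcap_(Y in restr @: C) Y = restr (\bigcap_(X in C) X).
Proof.
apply/setP => v; rewrite inE; apply/bigcapP/bigcapP => [vC X XC | vC _ /imsetP [X XC ->]].
  by have := vC _ (imset_f _ XC); rewrite inE.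
by rewrite inE; apply: vC.
Qed.

Lemma restr_inj C : {in C, forall X, A \subset X} -> {in C &, injective restr}.
Proof. by move=> supC X X' XC X'C eqXX'; rewrite -(restrK (supC X XC)) eqXX' restrK ?supC. Qed.

Lemma imset_extend_restr D : {in D, forall X, A \subset X} -> extend @: (restr @: D) = D.
Proof.
move=> supD; rewrite -imset_comp -[RHS]imset_id; apply: eq_in_imset => X XD.
exact: restrK (supD X XD).
Qed.

Lemma imset_restr_extend (E : {set {set V}}) : restr @: (extend @: E) = E.
Proof. by rewrite -imset_comp -[RHS]imset_id; apply: eq_imset extendK. Qed.

(* [codim] is unchanged when both [d] and every set lose [|A|] elements, hence so is [D_d]. *)
Lemma positive_defect_restr d C : #|A| <= d -> {in C, forall X, A \subset X} ->
  positive_defect (d - #|A|) (restr @: C) = positive_defect d C.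
Proof.
move=> Ad supC; have inj := restr_inj supC.
rewrite /positive_defect bigcap_restr card_in_imset // /sumcard big_imset //=.
have cap : #|restr (\bigcap_(X in C) X)| + #|A| = #|\bigcap_(X in C) X|.
  exact/card_restr/bigcapsP.
have sum : \sum_(X in C) #|restr X| + #|C| * #|A| = \sum_(X in C) #|X|.
  by rewrite -sum_nat_const -big_split; apply: eq_bigr => X XC; apply: card_restr (supC X XC).
have mul : #|C| * (d - #|A|).+1 + #|C| * #|A| = #|C| * d.+1.
  by rewrite -mulnDr; congr (_ * _); lia.
move: cap sum mul; set a := #|C| * (d - #|A|).+1; set b := #|C| * #|A|.
set c := #|C| * d.+1; set s := \sum_(X in C) #|restr X|; set t := \sum_(X in C) #|X|.
set r := #|restr (\bigcap_(X in C) X)|; set k := #|\bigcap_(X in C) X|.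
by move=> *; apply/idP/idP; lia.
Qed.

Lemma inL_restr d D : #|A| <= d -> {in D, forall X, A \subset X} ->
  inL (d - #|A|) (restr @: D) = inL d D.
Proof.
move=> Ad supD.
have supC C : C \subset D -> {in C, forall X, A \subset X} by move=> /subsetP sCD X /sCD /supD.
have card_restr_d X : X \in D -> (#|restr X| <= d - #|A|) = (#|X| <= d).
  by move=> XD; have := card_restr (supD X XD) => eqX; apply/idP/idP; lia.
apply/idP/idP => inLD.
  apply: inLI => [C sCD C_gt1 | X XD].
    2: by rewrite -(card_restr_d X XD) (inL_card inLD) ?imset_f.
  rewrite -(positive_defect_restr Ad (supC C sCD)) (inL_defect inLD) ?imsetS //.
  by rewrite (card_in_imset (restr_inj (supC C sCD))).
apply: inLI => [C' sC'D C'_gt1 | _ /imsetP [X XD ->]].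
  2: by rewrite (card_restr_d X XD) (inL_card inLD).
have sCD : extend @: C' \subset D.
  apply/subsetP => _ /imsetP [Y /(subsetP sC'D) /imsetP [X XD ->] ->].
  by rewrite restrK // supD.
have eqC' := imset_restr_extend C'.
rewrite -eqC' (positive_defect_restr Ad (supC _ sCD)) (inL_defect inLD) //.
by rewrite -(card_in_imset (restr_inj (supC _ sCD))) eqC'.
Qed.

Lemma refines_restr D D' : {in D, forall X, A \subset X} -> {in D', forall X, A \subset X} ->
  refines (restr @: D) (restr @: D') = refines D D'.
Proof.
move=> supD supD'; apply/forall_inP/forall_inP => [DD' X XD | DD' _ /imsetP [X XD ->]].
  have /exists_inP [_ /imsetP [Y YD' ->]] := DD' _ (imset_f _ XD).
  by rewrite restr_subset ?(supD' Y YD') ?(supD X XD) // => YX; apply/exists_inP; exists Y.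
have /exists_inP [Y YD' YX] := DD' X XD.
by apply/exists_inP; exists (restr Y); rewrite ?imset_f // restr_subset ?(supD' Y YD') ?(supD X XD).
Qed.

End Transport.

Lemma card_setC_ord n (S : {set 'I_n}) : #|~: S| = n - #|S|.
Proof. by have := cardsC S; rewrite card_ord; lia. Qed.

Definition compl_enum n (S : {set 'I_n}) (v : 'I_(n - #|S|)) : 'I_n :=
  enum_val (A := ~: S) (cast_ord (esym (card_setC_ord S)) v).

Lemma compl_enum_inj n (S : {set 'I_n}) : injective (@compl_enum n S).
Proof. by move=> v w /enum_val_inj /cast_ord_inj. Qed.

Lemma compl_enum_notin n (S : {set 'I_n}) v : @compl_enum n S v \notin S.
Proof. by have := enum_valP (cast_ord (esym (card_setC_ord S)) v); rewrite inE. Qed.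

Lemma compl_enum_onto n (S : {set 'I_n}) u : u \notin S -> exists v, @compl_enum n S v = u.
Proof.
move=> uS; have uC : u \in ~: S by rewrite inE.
exists (cast_ord (card_setC_ord S) (enum_rank_in uC u)).
by rewrite /compl_enum cast_ordK enum_rankK_in.
Qed.

Section Factor.
Variables (n d : nat) (S : {set 'I_n}).
Hypothesis Sd : #|S| <= d.
Let e := @compl_enum n S.
Let e_inj := @compl_enum_inj n S.
Let e_notin := @compl_enum_notin n S.
Let e_onto := @compl_enum_onto n S.
Implicit Types (X : {set 'I_n}) (D : {set {set 'I_n}}) (E : {set {set 'I_(n - #|S|)}}).

Definition restr_factor D : {set {set 'I_(n - #|S|)}} := restr e @: D.
Definition extend_factor E : {set {set 'I_n}} := extend S e @: E.

Lemma inL_restr_factor D : D \in idealL d [set S] -> inL (d - #|S|) (restr_factor D).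
Proof. by case/(idealL_set1P _ Sd) => inLD supD; rewrite inL_restr. Qed.

Lemma extend_factorK : cancel extend_factor restr_factor.
Proof. exact: imset_restr_extend. Qed.

Lemma restr_factorK D : D \in idealL d [set S] -> extend_factor (restr_factor D) = D.
Proof. by case/(idealL_set1P _ Sd) => _; apply: imset_extend_restr. Qed.

Lemma extend_factor_idealL E : inL (d - #|S|) E -> extend_factor E \in idealL d [set S].
Proof.
have supE : {in extend_factor E, forall X, S \subset X}.
  by move=> _ /imsetP [Y _ ->]; apply: subset_extend.
move=> inLE; apply/(idealL_set1P _ Sd); split => //.
rewrite -(inL_restr e_inj e_notin e_onto Sd supE).
by rewrite -[restr e @: _]/(restr_factor _) extend_factorK.
Qed.

Lemma leL_restr_factor D D' : D \in idealL d [set S] -> D' \in idealL d [set S] ->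
  leL (d - #|S|) (restr_factor D) (restr_factor D') = leL d D D'.
Proof.
move=> /(idealL_set1P _ Sd) [inLD supD] /(idealL_set1P _ Sd) [inLD' supD'].
by rewrite !leL_refines /restr_factor ?inL_restr // (refines_restr e_inj e_onto supD supD').
Qed.

End Factor.

Section Decomposition.
Variables (n d : nat) (T : {set {set 'I_n}}).
Hypothesis inLT : inL d T.
Implicit Types (S X : {set 'I_n}) (C : {set {set 'I_n}}).
Implicit Types (g : {ffun {set 'I_n} -> {set {set 'I_n}}}).

Lemma prodI_factor g S : prodI d T g -> S \in T -> g S \in idealL d [set S].
Proof. by move=> /forallP /(_ S); case: (S \in T). Qed.

Lemma prodI_out g S : prodI d T g -> S \notin T -> g S = set0.
Proof. by move=> /forallP /(_ S); case: (S \in T) => // /eqP. Qed.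

Lemma prodL_factor (y : prodLtype n) S : prodL d T y -> S \in T -> inL (d - #|S|) (y S).
Proof. by move=> /forallP /(_ S); case: (S \in T). Qed.

Lemma prodL_out (y : prodLtype n) S : prodL d T y -> S \notin T -> y S = set0.
Proof. by move=> /forallP /(_ S); case: (S \in T) => // /eqP. Qed.

Lemma prodI_factorP g S : prodI d T g -> S \in T ->
  inL d (g S) /\ {in g S, forall X, S \subset X}.
Proof. by move=> gT ST; apply/(idealL_set1P _ (inL_card inLT ST))/prodI_factor. Qed.

Definition split_above C := [ffun S => if S \in T then above C S else set0].

Lemma split_above_prodI C : idealL d T C -> prodI d T (split_above C).
Proof.
rewrite idealL_refines // => /andP [inLC _]; apply/forallP => S; rewrite ffunE.
case: (boolP (S \in T)) => ST //; apply/(idealL_set1P _ (inL_card inLT ST)).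
by split; [apply: inL_subset inLC (above_sub _ _) | move=> X /setIdP []].
Qed.

Lemma bigcup_split_above C : refines C T -> \bigcup_(S in T) split_above C S = C.
Proof.
move=> CT; rewrite -[RHS](bigcup_above CT).
by apply: eq_bigr => S ST; rewrite ffunE ST.
Qed.

Lemma prodI_factor_mem g : prodI d T g ->
  (forall S X, S \in T -> X \in g S -> S \subset X /\ #|X| <= d).
Proof.
move=> gT S X ST XgS; have [inLg supg] := prodI_factorP gT ST.
by rewrite supg // (inL_card inLg).
Qed.

Lemma bigcup_idealL g : prodI d T g -> idealL d T (\bigcup_(S in T) g S).
Proof.
move=> gT; rewrite idealL_refines //; apply/andP; split.
  apply: inL_bigcup inLT _ _ => S; first by case/(prodI_factorP gT).
  by move=> X ST /(prodI_factor_mem gT ST) [].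
apply/forall_inP => X /bigcupP [S ST XgS]; apply/exists_inP; exists S => //.
by have [] := prodI_factor_mem gT ST XgS.
Qed.

Lemma split_above_bigcup g : prodI d T g -> split_above (\bigcup_(S in T) g S) = g.
Proof.
move=> gT; apply/ffunP => S; rewrite ffunE.
case: ifPn => ST; [exact: above_bigcup inLT (prodI_factor_mem gT) ST | by rewrite prodI_out].
Qed.

Lemma leL_split_above C C' : idealL d T C -> idealL d T C' ->
  leL d C C' = prodI_le d T (split_above C) (split_above C').
Proof.
rewrite !idealL_refines // => /andP [inLC CT] /andP [inLC' C'T].
rewrite leL_refines // (refines_above inLT (fun X => inL_card inLC) CT C'T).
apply: eq_forallb => S; case: (boolP (S \in T)) => //= ST.
by rewrite !ffunE ST leL_refines ?(inL_subset inLC (above_sub _ _))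
  ?(inL_subset inLC' (above_sub _ _)).
Qed.

Lemma poset_iso_idealL_prodI : poset_iso (idealL d T) (@leL _ d) (prodI d T) (@prodI_le n d T).
Proof.
exists split_above; split.
- exact: split_above_prodI.
- move=> C C'; rewrite !idealL_refines // => /andP [_ CT] /andP [_ C'T] eqCC'.
  by rewrite -(bigcup_split_above CT) -(bigcup_split_above C'T) eqCC'.
- by move=> g gT; exists (\bigcup_(S in T) g S); rewrite ?bigcup_idealL ?split_above_bigcup.
- exact: leL_split_above.
Qed.

Definition restr_factors g : prodLtype n := finfun (fun S => restr_factor S (g S)).

Definition extend_factors (y : prodLtype n) : {ffun {set 'I_n} -> {set {set 'I_n}}} :=
  [ffun S => if S \in T then extend_factor (y S) else set0].

Lemma poset_iso_prodI_prodL : poset_iso (prodI d T) (@prodI_le n d T) (prodL d T) (@prodL_le n d T).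
Proof.
have Td S : S \in T -> #|S| <= d := inL_card inLT.
exists restr_factors; split.
- move=> g gT; apply/forallP => S; rewrite ffunE; case: (boolP (S \in T)) => ST.
    by have := inL_restr_factor (Td S ST) (prodI_factor gT ST).
  by rewrite prodI_out // /restr_factor imset0.
- move=> g g' gT g'T eqgg'; apply/ffunP => S.
  case: (boolP (S \in T)) => ST; last by rewrite !prodI_out.
  have := congr1 (fun y : prodLtype n => y S) eqgg'; rewrite /= !ffunE => eqS.
  rewrite -(restr_factorK (Td S ST) (prodI_factor gT ST)) eqS.
  by have := restr_factorK (Td S ST) (prodI_factor g'T ST).
- move=> y yT; exists (extend_factors y).
    apply/forallP => S; rewrite ffunE; case: (boolP (S \in T)) => ST //.
    by have := extend_factor_idealL (Td S ST) (prodL_factor yT ST).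
  apply/ffunP => S; rewrite !ffunE; case: (boolP (S \in T)) => ST; first by rewrite extend_factorK.
  by rewrite prodL_out // /restr_factor imset0.
- move=> g g' gT g'T; apply: eq_forallb => S; case: (boolP (S \in T)) => //= ST.
  rewrite /restr_factors !ffunE.
  by have := leL_restr_factor (Td S ST) (prodI_factor gT ST) (prodI_factor g'T ST).
Qed.

End Decomposition.

Theorem theorem3p1 (n d : nat) (T : {set {set 'I_n}}) :
  (d < n)%N -> inL d T -> T != set0 ->
  [/\ poset_iso (idealL d T) (@leL _ d) (prodI d T) (@prodI_le n d T),
      poset_iso (idealL d T) (@leL _ d) (prodL d T) (@prodL_le n d T) &
      poset_iso (prodI d T) (@prodI_le n d T) (prodL d T) (@prodL_le n d T)].
Proof.
move=> _ inLT _.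
have isoI := poset_iso_idealL_prodI inLT; have isoL := poset_iso_prodI_prodL inLT.
by split => //; apply: poset_iso_trans isoI isoL.
Qed.
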